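(* Let $G=(V,E)$ be a finite undirected graph with $|V|=n$, and let $G^{\ell}$ be the directed graph on $V$ obtained by replacing every edge $\{u,v\}\in E$ by the two arcs $u\to v$ and $v\to u$. Then for every linear ordering $\varphi$ of $V$, $$\mathrm{VS}(G,\varphi)\le \mathrm{RB}(G^{\ell},\varphi)\le \mathrm{VS}(G,\varphi)+1 .$$
   Context: A linear ordering of a finite vertex set $V$ with $|V|=n$ is a bijection $\varphi:\{1,\dots,n\}\to V$; write $\mathrm{pos}(u)=\varphi^{-1}(u)$. For an undirected graph $G=(V,E)$, the vertex separation value is $\mathrm{VS}(G,\varphi)=\max_{1\le i\le n}\left|\{u\in V:\exists\{u,v\}\in E \text{ with } \mathrm{pos}(u)\le i<\mathrm{pos}(v)\}\right|$. For a directed graph $D=(V,A)$ (a labeled dependency graph; an arc $u\to w$ means object $u$ depends on object $w$, i.e. $w$ must leave its start pose before $u$ can be placed at its goal), the running buffer count of $\varphi$ is defined by the following process: objects are picked in the order $\varphi(1),\varphi(2),\dots$; let $S_i=\{\varphi(1),\dots,\varphi(i)\}$ ($S_0=\emptyset$) and $B_i=\{u\in S_i:\exists\, (u\to w)\in A \text{ with } w\notin S_i\}$ (objects stored in an external buffer after step $i$, all others in $S_i$ having been placed at their goals at the earliest opportunity). Then $\mathrm{RB}(D,\varphi)=\max_{1\le i\le n}\big(|B_{i-1}|+[\varphi(i)\in B_i]\big)$, where $[\cdot]$ is $1$ if the condition holds and $0$ otherwise (when $\varphi(i)$ must itself go to the buffer, it is stored there before the objects it releases can leave the buffer). *)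

From mathcomp Require Import all_boot.
Set Implicit Arguments. Unset Strict Implicit. Unset Printing Implicit Defensive.

(* A linear ordering of the finite vertex set T is a bijection
   phi : 'I_#|T| -> T.  Positions are 0-based: phi (ord k) is the (k+1)-st
   object, so pos(u) = 1 + (index of u).  *)

(* S_i = {phi(1),...,phi(i)} (1-based), i.e. the vertices of 0-based index < i *)
Definition prefix (T : finType) (phi : 'I_#|T| -> T) (i : nat) : {set T} :=
  [set phi k | k : 'I_#|T| & k < i].

Definition simple_graph (T : finType) (e : rel T) : Prop :=
  symmetric e /\ irreflexive e.

Definition vs_cut (T : finType) (e : rel T) (phi : 'I_#|T| -> T) (i : nat)
  : {set T} :=
  [set u in prefix phi i | [exists v, e u v && (v \notin prefix phi i)]].

Definition VS (T : finType) (e : rel T) (phi : 'I_#|T| -> T) : nat :=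
  \max_(1 <= i < #|T|.+1) #|vs_cut e phi i|.

(* Directed graph given by an arc relation a : a u w  means  u -> w. *)
Definition buffer (T : finType) (a : rel T) (phi : 'I_#|T| -> T) (i : nat)
  : {set T} :=
  [set u in prefix phi i | [exists w, a u w && (w \notin prefix phi i)]].

(* RB(D, phi) = max_{1<=i<=n} (|B_{i-1}| + [phi(i) in B_i]);
   with 0-based k = i-1, phi(i) is phi k. *)
Definition RB (T : finType) (a : rel T) (phi : 'I_#|T| -> T) : nat :=
  \max_(k < #|T|) (#|buffer a phi k| + (phi k \in buffer a phi k.+1)).

Definition labeled_digraph (T : finType) (e : rel T) : rel T :=
  fun u w => e u w || e w u.

From Pilot Require Import Defs.
From mathcomp Require Import all_boot.

Set Implicit Arguments.
Unset Strict Implicit.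

(** For a symmetric relation the buffer B_i of G^l is exactly the cut of the
    vertex separation at position i.  Apart from phi k, every vertex of the cut
    after k+1 objects already lies in the cut after k objects, so the cut size
    at k+1 is bounded by the k-th term |cut_k| + [phi k in cut_(k+1)] of RB;
    this gives VS <= RB.  Conversely each term of RB is a cut size, at most VS,
    plus one bit. *)

Section VertexSeparationCuts.

Variables (T : finType) (e : rel T) (phi : 'I_#|T| -> T).

Lemma prefix0 : Defs.prefix phi 0 = set0.
Proof. by apply/setP => u; rewrite inE; apply/imsetP => -[j]; rewrite inE. Qed.

Lemma prefixS (k : 'I_#|T|) : Defs.prefix phi k.+1 = phi k |: Defs.prefix phi k.
Proof.
apply/setP => u; rewrite in_setU1; apply/imsetP/orP.
- move=> [j]; rewrite inE ltnS leq_eqVlt => /orP [/eqP/val_inj -> -> | jk ->].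
    by left.
  by right; apply/imsetP; exists j; rewrite ?inE.
- move=> [/eqP -> | /imsetP [j]]; first by exists k; rewrite ?inE.
  by rewrite inE => jk ->; exists j; rewrite // inE ltnW.
Qed.

Lemma vs_cut0 : vs_cut e phi 0 = set0.
Proof. by apply/setP => u; rewrite !inE prefix0 inE. Qed.

Lemma vs_cutS_setD1 (k : 'I_#|T|) :
  vs_cut e phi k.+1 :\ phi k \subset vs_cut e phi k.
Proof.
apply/subsetP => u; rewrite !inE prefixS in_setU1.
case/and3P => /negPf -> /= uk /existsP [v /andP [euv]].
rewrite in_setU1 negb_or => /andP [_ vk].
by rewrite uk; apply/existsP; exists v; rewrite euv.
Qed.

Lemma card_vs_cutS (k : 'I_#|T|) :
  #|vs_cut e phi k.+1| <= #|vs_cut e phi k| + (phi k \in vs_cut e phi k.+1).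
Proof.
by rewrite (cardsD1 (phi k)) addnC leq_add2r subset_leq_card ?vs_cutS_setD1.
Qed.

Lemma card_vs_cut_le_VS i : i <= #|T| -> #|vs_cut e phi i| <= VS e phi.
Proof.
case: i => [|i] iT; first by rewrite vs_cut0 cards0.
rewrite /VS; apply: (@leq_bigmax_seq _ _ _ (fun i : nat => #|vs_cut e phi i|)) => //.
by rewrite mem_index_iota.
Qed.

Lemma buffer_labeled_digraph i :
  symmetric e -> buffer (labeled_digraph e) phi i = vs_cut e phi i.
Proof.
move=> esym; apply/setP => u; rewrite !inE; congr (_ && _).
by apply: eq_existsb => v; rewrite /labeled_digraph (esym v u) orbb.
Qed.

End VertexSeparationCuts.

Theorem lemma1 (T : finType) (e : rel T) (phi : 'I_#|T| -> T) :
  simple_graph e -> bijective phi ->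
  VS e phi <= RB (labeled_digraph e) phi <= VS e phi + 1.
Proof.
move=> [esym _] _; rewrite /RB.
under eq_bigr do rewrite !buffer_labeled_digraph //.
apply/andP; split.
- apply/bigmax_leqP_seq => -[|k]; rewrite mem_index_iota // => /andP [_ kT] _.
  rewrite ltnS in kT.
  apply: leq_trans (card_vs_cutS e phi (Ordinal kT)) _.
  exact: (leq_bigmax (Ordinal kT)).
- apply/bigmax_leqP => k _.
  by rewrite leq_add ?leq_b1 // card_vs_cut_le_VS // ltnW.
Qed.
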